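(* Let $(M,\pi)$ be a partial $H$-module and write $h\cdot m=\pi(h)(m)$. (a) The global core of $M$ is $$c(M)=\{m\in M : g\cdot(h\cdot m)=(gh)\cdot m \text{ for all } g,h\in H\},$$ and $c$ defines a functor ${}_H\mathcal M^{par}\to{}_H\mathcal M$ that is right adjoint to the inclusion functor $i:{}_H\mathcal M\to{}_H\mathcal M^{par}$. (b) The global shadow of $M$ is $s(M)=M/N$, where $N$ is the partial $H$-submodule of $M$ generated by all elements $h\cdot(g\cdot m)-(hg)\cdot m$ with $h,g\in H$, $m\in M$. Moreover $s$ defines a functor ${}_H\mathcal M^{par}\to{}_H\mathcal M$ that is left adjoint to $i$.
   Context: Throughout, $k$ is a field and $H$ is a Hopf algebra over $k$ with bijective antipode $S$ and Sweedler notation $\Delta(h)=h_{(1)}\otimes h_{(2)}$. A partial $H$-module is a vector space $M$ with a linear map $\pi:H\to\mathrm{End}_k(M)$ satisfying, for all $h,k\in H$: - $\pi(1_H)=\mathrm{id}$; - $\pi(h)\pi(k_{(1)})\pi(S(k_{(2)}))=\pi(hk_{(1)})\pi(S(k_{(2)}))$; - $\pi(h_{(1)})\pi(S(h_{(2)}))\pi(k)=\pi(h_{(1)})\pi(S(h_{(2)})k)$; - $\pi(h)\pi(S(k_{(1)}))\pi(k_{(2)})=\pi(hS(k_{(1)}))\pi(k_{(2)})$; - $\pi(S(h_{(1)}))\pi(h_{(2)})\pi(k)=\pi(S(h_{(1)}))\pi(h_{(2)}k)$. Morphisms of partial $H$-modules are linear maps commuting with the $\pi(h)$; they form the category ${}_H\mathcal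 M^{par}$. A partial submodule is a subspace stable under all $\pi(h)$. Every left $H$-module $M$ (action $\triangleright$) is a partial $H$-module via $\pi(h)(m)=h\triangleright m$. This gives the inclusion functor $i:{}_H\mathcal M\to{}_H\mathcal M^{par}$. A partial $H$-module is called global if $\pi$ is an algebra morphism, i.e. it lies in the image of $i$. The global core of $M$ is the largest partial submodule of $M$ that is global. The global shadow is the largest quotient of $M$ (by a partial submodule) that is global. *)

From HB Require Import structures.
From mathcomp Require Import all_boot all_order all_algebra.
Set Implicit Arguments. Unset Strict Implicit. Unset Printing Implicit Defensive.
Import GRing.Theory.
Local Open Scope ring_scope.

Section Hopf.
Variable k : fieldType.

Definition klinear (U V : lmodType k) (f : U -> V) : Prop :=
  forall (a : k) (x y : U), f (a *: x + y) = a *: f x + f y.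

Variable H : algType k.

(** Elements of H (x) H are represented (Sweedler style) by finite lists of
    simple tensors [sum_i a_i (x) b_i].  Two such lists represent the same
    tensor iff every bilinear map agrees on them; all axioms involving
    tensors are therefore stated by testing against multilinear maps. *)
Definition bilin (V : lmodType k) (f : H -> H -> V) : Prop :=
  (forall a, klinear (f a : H -> V)) /\ (forall b, klinear (fun a : H => f a b)).

Definition trilin (V : lmodType k) (f : H -> H -> H -> V) : Prop :=
  (forall a b, klinear (f a b : H -> V)) /\
  (forall a c, klinear (fun b : H => f a b c)) /\
  (forall b c, klinear (fun a : H => f a b c)).

Definition teval (V : lmodType k) (t : seq (H * H)) (f : H -> H -> V) : V :=
  \sum_(p <- t) f p.1 p.2.

Record hopf := Hopf {
  Delta : H -> seq (H * H);
  eps : H -> k;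
  antip : H -> H;
  Delta_lin : forall (V : lmodType k) (f : H -> H -> V), bilin f ->
    forall a x y, teval (Delta (a *: x + y)) f
                  = a *: teval (Delta x) f + teval (Delta y) f;
  Delta_mul : forall (V : lmodType k) (f : H -> H -> V), bilin f ->
    forall g h, teval (Delta (g * h)) f
      = \sum_(p <- Delta g) \sum_(q <- Delta h) f (p.1 * q.1) (p.2 * q.2);
  Delta_one : forall (V : lmodType k) (f : H -> H -> V), bilin f ->
    teval (Delta 1) f = f 1 1;
  coassoc : forall (V : lmodType k) (f : H -> H -> H -> V), trilin f ->
    forall h, \sum_(p <- Delta h) \sum_(q <- Delta p.1) f q.1 q.2 p.2
            = \sum_(p <- Delta h) \sum_(q <- Delta p.2) f p.1 q.1 q.2;
  eps_lin : forall a x y, eps (a *: x + y) = a * eps x + eps y;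
  eps_mul : forall g h, eps (g * h) = eps g * eps h;
  eps_one : eps 1 = 1;
  counit_l : forall h, \sum_(p <- Delta h) eps p.1 *: p.2 = h;
  counit_r : forall h, \sum_(p <- Delta h) eps p.2 *: p.1 = h;
  antip_lin : forall a x y, antip (a *: x + y) = a *: antip x + antip y;
  antip_l : forall h, \sum_(p <- Delta h) antip p.1 * p.2 = eps h *: 1;
  antip_r : forall h, \sum_(p <- Delta h) p.1 * antip p.2 = eps h *: 1;
  antip_bij : bijective antip
}.

Variable HH : hopf.
Local Notation D := (Delta HH).
Local Notation S := (antip HH).

Record pmod := PMod {
  pcar :> lmodType k;
  pact : H -> pcar -> pcar;
  pact_linr : forall h, klinear (pact h);
  pact_linl : forall a g h m, pact (a *: g + h) m = a *: pact g m + pact h m;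
  pact_one : forall m, pact 1 m = m;
  pax1 : forall h g m,
    \sum_(p <- D g) pact h (pact p.1 (pact (S p.2) m))
    = \sum_(p <- D g) pact (h * p.1) (pact (S p.2) m);
  pax2 : forall h g m,
    \sum_(p <- D h) pact p.1 (pact (S p.2) (pact g m))
    = \sum_(p <- D h) pact p.1 (pact (S p.2 * g) m);
  pax3 : forall h g m,
    \sum_(p <- D g) pact h (pact (S p.1) (pact p.2 m))
    = \sum_(p <- D g) pact (h * S p.1) (pact p.2 m);
  pax4 : forall h g m,
    \sum_(p <- D h) pact (S p.1) (pact p.2 (pact g m))
    = \sum_(p <- D h) pact (S p.1) (pact (p.2 * g) m)
}.

Record hmod := HMod {
  hcar :> lmodType k;
  hact : H -> hcar -> hcar;
  hact_linr : forall h, klinear (hact h);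
  hact_linl : forall a g h m, hact (a *: g + h) m = a *: hact g m + hact h m;
  hact_one : forall m, hact 1 m = m;
  hact_mul : forall g h m, hact g (hact h m) = hact (g * h) m
}.

Definition pmorph (M N : pmod) (f : M -> N) : Prop :=
  klinear f /\ forall h m, f (pact h m) = pact h (f m).
Definition hmorph (X Y : hmod) (f : X -> Y) : Prop :=
  klinear f /\ forall h m, f (hact h m) = hact h (f m).

(** The inclusion functor i : H-Mod -> H-Mod^par (on objects; on morphisms it
    is the identity on underlying maps). *)
Lemma incl_pax1 (X : hmod) h g (m : X) :
  \sum_(p <- D g) hact h (hact p.1 (hact (S p.2) m))
  = \sum_(p <- D g) hact (h * p.1) (hact (S p.2) m).
Proof. apply: eq_bigr => p _. by rewrite (hact_mul h p.1). Qed.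
Lemma incl_pax2 (X : hmod) h g (m : X) :
  \sum_(p <- D h) hact p.1 (hact (S p.2) (hact g m))
  = \sum_(p <- D h) hact p.1 (hact (S p.2 * g) m).
Proof. apply: eq_bigr => p _. by rewrite (hact_mul (S p.2) g). Qed.
Lemma incl_pax3 (X : hmod) h g (m : X) :
  \sum_(p <- D g) hact h (hact (S p.1) (hact p.2 m))
  = \sum_(p <- D g) hact (h * S p.1) (hact p.2 m).
Proof. apply: eq_bigr => p _. by rewrite (hact_mul h (S p.1)). Qed.
Lemma incl_pax4 (X : hmod) h g (m : X) :
  \sum_(p <- D h) hact (S p.1) (hact p.2 (hact g m))
  = \sum_(p <- D h) hact (S p.1) (hact (p.2 * g) m).
Proof. apply: eq_bigr => p _. by rewrite (hact_mul p.2 g). Qed.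

Definition incl (X : hmod) : pmod :=
  @PMod (hcar X) (@hact X) (@hact_linr X) (@hact_linl X) (@hact_one X)
    (@incl_pax1 X) (@incl_pax2 X) (@incl_pax3 X) (@incl_pax4 X).

(** A partial module is global if pi is an algebra morphism (pi is already
    linear and unital, so this is multiplicativity). *)
Definition pglobal (M : pmod) : Prop :=
  forall g h (m : M), pact g (pact h m) = pact (g * h) m.

Definition psubmod (M : pmod) (P : M -> Prop) : Prop :=
  P 0 /\ (forall a x y, P x -> P y -> P (a *: x + y)) /\
  (forall h m, P m -> P (pact h m)).

Definition psub_global (M : pmod) (P : M -> Prop) : Prop :=
  forall g h m, P m -> pact g (pact h m) = pact (g * h) m.

Definition is_global_core (M : pmod) (P : M -> Prop) : Prop :=
  psubmod P /\ psub_global P /\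
  (forall Q, psubmod Q -> psub_global Q -> forall m, Q m -> P m).

(** q : M -> Q realizes the quotient of M by P: a surjective morphism of
    partial modules with kernel P (so Q is M/P up to isomorphism). *)
Definition quotient_map (M Q : pmod) (q : M -> Q) (P : M -> Prop) : Prop :=
  pmorph q /\ (forall y : Q, exists m, q m = y) /\ (forall m, q m = 0 <-> P m).

Definition quot_global (M : pmod) (P : M -> Prop) : Prop :=
  exists (Q : pmod) (q : M -> Q), quotient_map q P /\ pglobal Q.

(** M/P is the global shadow: the largest global quotient of M by a partial
    submodule, i.e. P is the smallest partial submodule with M/P global. *)
Definition is_global_shadow (M : pmod) (P : M -> Prop) : Prop :=
  psubmod P /\ quot_global P /\
  (forall P', psubmod P' -> quot_global P' -> forall m, P m -> P' m).

Definition core_set (M : pmod) (m : M) : Prop :=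
  forall g h, pact g (pact h m) = pact (g * h) m.

Definition shadow_gen (M : pmod) (x : M) : Prop :=
  exists h g m, x = pact h (pact g m) - pact (h * g) m.
Definition gen_psubmod (M : pmod) (G : M -> Prop) (x : M) : Prop :=
  forall P, psubmod P -> (forall y, G y -> P y) -> P x.

Definition is_functor_PH (F : pmod -> hmod)
    (FF : forall M N : pmod, (M -> N) -> F M -> F N) : Prop :=
  (forall (M N : pmod) (f : M -> N), pmorph f -> hmorph (FF M N f)) /\
  (forall (M : pmod) (x : F M), FF M M id x = x) /\
  (forall (M N L : pmod) (f : M -> N) (g : N -> L), pmorph f -> pmorph g ->
     forall x, FF M L (g \o f) x = FF N L g (FF M N f x)).

(** Hom-set adjunction  i -| G :  Hom_par(i X, M) ~ Hom_H(X, G M),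
    natural in X and M. *)
Definition right_adjoint_of_incl (G : pmod -> hmod)
    (GF : forall M N : pmod, (M -> N) -> G M -> G N) : Prop :=
  exists (Phi : forall (X : hmod) (M : pmod), (X -> M) -> X -> G M)
         (Psi : forall (X : hmod) (M : pmod), (X -> G M) -> X -> M),
  (forall (X : hmod) (M : pmod) (f : X -> M), @pmorph (incl X) M f -> hmorph (Phi X M f)) /\
  (forall (X : hmod) (M : pmod) (g : X -> G M), hmorph g -> @pmorph (incl X) M (Psi X M g)) /\
  (forall (X : hmod) (M : pmod) (f : X -> M), @pmorph (incl X) M f ->
     forall x, Psi X M (Phi X M f) x = f x) /\
  (forall (X : hmod) (M : pmod) (g : X -> G M), hmorph g ->
     forall x, Phi X M (Psi X M g) x = g x) /\
  (forall (X X' : hmod) (M : pmod) (u : X' -> X) (f : X -> M), hmorph u -> @pmorph (incl X) M f ->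
     forall x, Phi X' M (f \o u) x = Phi X M f (u x)) /\
  (forall (X : hmod) (M N : pmod) (f : X -> M) (v : M -> N), @pmorph (incl X) M f -> pmorph v ->
     forall x, Phi X N (v \o f) x = GF M N v (Phi X M f x)).

(** Hom-set adjunction  F -| i :  Hom_H(F M, X) ~ Hom_par(M, i X),
    natural in M and X. *)
Definition left_adjoint_of_incl (F : pmod -> hmod)
    (FF : forall M N : pmod, (M -> N) -> F M -> F N) : Prop :=
  exists (Phi : forall (M : pmod) (X : hmod), (F M -> X) -> M -> X)
         (Psi : forall (M : pmod) (X : hmod), (M -> X) -> F M -> X),
  (forall (M : pmod) (X : hmod) (g : F M -> X), hmorph g -> @pmorph M (incl X) (Phi M X g)) /\
  (forall (M : pmod) (X : hmod) (f : M -> X), @pmorph M (incl X) f -> hmorph (Psi M X f)) /\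
  (forall (M : pmod) (X : hmod) (g : F M -> X), hmorph g ->
     forall y, Psi M X (Phi M X g) y = g y) /\
  (forall (M : pmod) (X : hmod) (f : M -> X), @pmorph M (incl X) f ->
     forall m, Phi M X (Psi M X f) m = f m) /\
  (forall (M N : pmod) (X : hmod) (u : M -> N) (g : F N -> X), pmorph u -> hmorph g ->
     forall m, Phi M X (g \o FF M N u) m = Phi N X g (u m)) /\
  (forall (M : pmod) (X Y : hmod) (g : F M -> X) (v : X -> Y), hmorph g -> hmorph v ->
     forall m, Phi M Y (v \o g) m = v (Phi M X g m)).

End Hopf.

(* The identity g.(h.m) = (gh).m defining c(M) is linear in m, and if it holds for m it
   holds for every l.m, since g.(h.(l.m)) = g.((hl).m) = (ghl).m.  So c(M) is a partial
   submodule, global by construction and containing every global partial submodule.  A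
   morphism i X -> M out of a global module sends every element into c(M), so
   corestriction is the bijection Hom(i X, M) ~ Hom(X, c M).
   Dually, M/P is global as soon as P contains the defects h.(g.m) - (hg).m, and a morphism
   from M to a global module kills the defects, hence the submodule N they generate.  So
   M/N is the largest global quotient, and every morphism M -> i X factors uniquely
   through it, giving Hom(M, i X) ~ Hom(s M, X). *)

From HB Require Import structures.
From mathcomp Require Import all_boot all_order all_algebra.
From mathcomp Require Import boolp.
Set Implicit Arguments. Unset Strict Implicit. Unset Printing Implicit Defensive.
Import GRing.Theory.
Local Open Scope ring_scope.
Local Open Scope quotient_scope.

Section KLinear.
Variables (k : fieldType) (U V : lmodType k) (f : U -> V).
Hypothesis f_lin : klinear f.

Lemma klinear0 : f 0 = 0.
Proof.
have := f_lin 1 0 0; rewrite scale1r addr0 scale1r => E.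
by apply: (addrI (f 0)); rewrite addr0 -E.
Qed.

Lemma klinearD x y : f (x + y) = f x + f y.
Proof. by have := f_lin 1 x y; rewrite !scale1r. Qed.

Lemma klinearZ a x : f (a *: x) = a *: f x.
Proof. by have := f_lin a x 0; rewrite klinear0 !addr0. Qed.

Lemma klinearB x y : f (x - y) = f x - f y.
Proof. by rewrite klinearD -scaleN1r klinearZ scaleN1r. Qed.

End KLinear.

Definition ksubspace (k : fieldType) (V : lmodType k) (P : V -> Prop) : Prop :=
  P 0 /\ forall a x y, P x -> P y -> P (a *: x + y).

Section KSubspace.
Variables (k : fieldType) (V : lmodType k) (P : V -> Prop).
Hypothesis P_sub : ksubspace P.

Lemma ksubspace0 : P 0.
Proof. by case: P_sub. Qed.

Lemma ksubspaceD x y : P x -> P y -> P (x + y).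
Proof. by case: P_sub => _ P_lin Px Py; have := P_lin 1 x y Px Py; rewrite scale1r. Qed.

Lemma ksubspaceZ a x : P x -> P (a *: x).
Proof. by case: P_sub => _ P_lin Px; have := P_lin a x 0 Px ksubspace0; rewrite addr0. Qed.

Lemma ksubspaceN x : P x -> P (- x).
Proof. by move=> Px; rewrite -scaleN1r; apply: ksubspaceZ. Qed.

Definition ksubspace_pred : {pred V} := fun v => `[< P v >].

Lemma ksubspace_predP v : reflect (P v) (v \in ksubspace_pred).
Proof. exact: asboolP. Qed.

Lemma ksubspace_pred_closed : subsemimod_closed ksubspace_pred.
Proof.
split; [split|].
- exact/ksubspace_predP/ksubspace0.
- by move=> x y /ksubspace_predP Px /ksubspace_predP Py; apply/ksubspace_predP/ksubspaceD.
- by move=> a x /ksubspace_predP Px; apply/ksubspace_predP/ksubspaceZ.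
Qed.

Definition quot_rel : rel V := fun x y => `[< P (x - y) >].

Lemma quot_rel_refl : reflexive quot_rel.
Proof. by move=> x; apply/asboolP; rewrite subrr; apply: ksubspace0. Qed.

Lemma quot_rel_sym : symmetric quot_rel.
Proof. by move=> x y; apply/asboolP/asboolP => Pxy; rewrite -opprB; apply: ksubspaceN. Qed.

Lemma quot_rel_trans : transitive quot_rel.
Proof.
move=> y x z /asboolP Pxy /asboolP Pyz; apply/asboolP.
by rewrite -(subrK y x) -addrA; apply: ksubspaceD.
Qed.

Definition quot_equiv := EquivRel quot_rel quot_rel_refl quot_rel_sym quot_rel_trans.
Definition quot_space := {eq_quot quot_equiv}.
HB.instance Definition _ := Choice.copy quot_space {eq_quot quot_equiv}.
HB.instance Definition _ := Quotient.copy quot_space {eq_quot quot_equiv}.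

Local Notation pi := \pi_quot_space.

Lemma quot_eqP x y : pi x = pi y <-> P (x - y).
Proof. by split => [/eqmodP/asboolP // | Pxy]; apply/eqmodP/asboolP. Qed.

Lemma quot_reprP x : P (repr (pi x) - x).
Proof. by apply/quot_eqP; rewrite reprK. Qed.

Definition quot_add (x y : quot_space) := pi (repr x + repr y).
Definition quot_opp (x : quot_space) := pi (- repr x).
Definition quot_scale a (x : quot_space) := pi (a *: repr x).

Lemma quot_addE x y : quot_add (pi x) (pi y) = pi (x + y).
Proof. by apply/quot_eqP; rewrite opprD addrACA; apply: ksubspaceD; apply: quot_reprP. Qed.

Lemma quot_oppE x : quot_opp (pi x) = pi (- x).
Proof. by apply/quot_eqP; rewrite -opprD; apply/ksubspaceN/quot_reprP. Qed.

Lemma quot_scaleE a x : quot_scale a (pi x) = pi (a *: x).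
Proof. by apply/quot_eqP; rewrite -scalerBr; apply/ksubspaceZ/quot_reprP. Qed.

Lemma quot_addA : associative quot_add.
Proof.
move=> x y z; elim/quotW: x => x; elim/quotW: y => y; elim/quotW: z => z.
by rewrite (quot_addE x y) (quot_addE y z) !quot_addE addrA.
Qed.

Lemma quot_addC : commutative quot_add.
Proof. by move=> x y; elim/quotW: x => x; elim/quotW: y => y; rewrite !quot_addE addrC. Qed.

Lemma quot_add0 : left_id (pi 0) quot_add.
Proof. by move=> x; elim/quotW: x => x; rewrite quot_addE add0r. Qed.

Lemma quot_addN : left_inverse (pi 0) quot_opp quot_add.
Proof. by move=> x; elim/quotW: x => x; rewrite quot_oppE quot_addE addNr. Qed.

HB.instance Definition _ :=
  GRing.isZmodule.Build quot_space quot_addA quot_addC quot_add0 quot_addN.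

Lemma quot_piD x y : pi (x + y) = pi x + pi y.
Proof. by rewrite -quot_addE. Qed.

Lemma quot_scaleA a b x : quot_scale a (quot_scale b x) = quot_scale (a * b) x.
Proof. by elim/quotW: x => x; rewrite (quot_scaleE b x) !quot_scaleE scalerA. Qed.

Lemma quot_scale1 : left_id 1 quot_scale.
Proof. by move=> x; elim/quotW: x => x; rewrite quot_scaleE scale1r. Qed.

Lemma quot_scaleDr : right_distributive quot_scale +%R.
Proof.
move=> a x y; elim/quotW: x => x; elim/quotW: y => y.
by rewrite -quot_piD !quot_scaleE -quot_piD scalerDr.
Qed.

Lemma quot_scaleDl x : {morph quot_scale^~ x : a b / a + b}.
Proof. by elim/quotW: x => x a b; rewrite !quot_scaleE -quot_piD scalerDl. Qed.

HB.instance Definition _ := GRing.Zmodule_isLmodule.Build k quot_space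
  quot_scaleA quot_scale1 quot_scaleDr quot_scaleDl.

Lemma quot_pi_klinear : klinear pi.
Proof. by move=> a x y; rewrite quot_piD -quot_scaleE. Qed.

Lemma quot_pi_eq0 x : pi x = 0 <-> P x.
Proof. by rewrite -(klinear0 quot_pi_klinear) quot_eqP subr0. Qed.

Lemma klinear_repr_pi (W : lmodType k) (f : V -> W) :
  klinear f -> (forall v, P v -> f v = 0) -> forall x, f (repr (pi x)) = f x.
Proof.
move=> f_lin f_P x; apply/eqP; rewrite -subr_eq0 -klinearB //.
exact/eqP/f_P/quot_reprP.
Qed.

End KSubspace.

Section PartialModules.
Variables (k : fieldType) (H : algType k) (HH : hopf H).

Lemma psubmod_ksubspace (M : pmod HH) (P : M -> Prop) : psubmod P -> ksubspace P.
Proof. by case=> P0 [P_lin _]. Qed.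

Lemma psubmod_act (M : pmod HH) (P : M -> Prop) :
  psubmod P -> forall h m, P m -> P (pact h m).
Proof. by case=> _ []. Qed.

Lemma pmorph_comp (M N L : pmod HH) (f : M -> N) (g : N -> L) :
  pmorph f -> pmorph g -> pmorph (g \o f).
Proof.
move=> [f_lin f_act] [g_lin g_act]; split=> [a x y | h m] /=.
  by rewrite f_lin g_lin.
by rewrite f_act g_act.
Qed.

Section GlobalSubmodule.
Variables (M : pmod HH) (P : M -> Prop).
Hypotheses (P_sub : psubmod P) (P_global : psub_global P).

Let P_ksub := psubmod_ksubspace P_sub.
HB.instance Definition _ :=
  GRing.isSubmodClosed.Build k M (ksubspace_pred P) (ksubspace_pred_closed P_ksub).

Inductive gsub_type : predArgType := GSub (m : M) & m \in ksubspace_pred P.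
Definition gsub_val (x : gsub_type) := let: GSub m _ := x in m.
HB.instance Definition _ := [isSub of gsub_type for gsub_val].
HB.instance Definition _ := [Choice of gsub_type by <:].
HB.instance Definition _ := [SubChoice_isSubZmodule of gsub_type by <:].
HB.instance Definition _ := [SubZmodule_isSubLmodule of gsub_type by <:].

Lemma gsub_act_subproof h (x : gsub_type) : pact h (gsub_val x) \in ksubspace_pred P.
Proof. by apply/ksubspace_predP/(psubmod_act P_sub)/ksubspace_predP/valP. Qed.

Definition gsub_act h x := GSub (gsub_act_subproof h x).

Lemma gsub_act_linr h : klinear (gsub_act h).
Proof. by move=> a x y; apply: val_inj; apply: pact_linr. Qed.

Lemma gsub_act_linl a g h x : gsub_act (a *: g + h) x = a *: gsub_act g x + gsub_act h x.
Proof. by apply: val_inj; rewrite /= pact_linl. Qed.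

Lemma gsub_act_one x : gsub_act 1 x = x.
Proof. by apply: val_inj; rewrite /= pact_one. Qed.

Lemma gsub_act_mul g h x : gsub_act g (gsub_act h x) = gsub_act (g * h) x.
Proof. by apply: val_inj; apply/P_global/ksubspace_predP/valP. Qed.

Definition gsub_hmod : hmod H :=
  HMod gsub_act_linr gsub_act_linl gsub_act_one gsub_act_mul.

Lemma gsub_val_pmorph : @pmorph k H HH (incl HH gsub_hmod) M gsub_val.
Proof. by []. Qed.

End GlobalSubmodule.

Section GlobalQuotient.
Variables (M : pmod HH) (P : M -> Prop).
Hypothesis P_sub : psubmod P.
Hypothesis P_defect : forall h g m, P (pact h (pact g m) - pact (h * g) m).

Let P_ksub := psubmod_ksubspace P_sub.
Local Notation pi := \pi_(quot_space P_ksub).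

Definition gquot_act h (x : quot_space P_ksub) := pi (pact h (repr x)).

Lemma gquot_actE h m : gquot_act h (pi m) = pi (pact h m).
Proof.
apply/quot_eqP; rewrite -klinearB; last exact: pact_linr.
exact/(psubmod_act P_sub)/(quot_reprP P_ksub).
Qed.

Lemma gquot_act_linr h : klinear (gquot_act h).
Proof.
move=> a x y; elim/quotW: x => x; elim/quotW: y => y.
by rewrite -(quot_pi_klinear P_ksub) !gquot_actE pact_linr quot_pi_klinear.
Qed.

Lemma gquot_act_linl a g h x : gquot_act (a *: g + h) x = a *: gquot_act g x + gquot_act h x.
Proof. by elim/quotW: x => x; rewrite !gquot_actE pact_linl quot_pi_klinear. Qed.

Lemma gquot_act_one x : gquot_act 1 x = x.
Proof. by elim/quotW: x => x; rewrite gquot_actE pact_one. Qed.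

Lemma gquot_act_mul g h x : gquot_act g (gquot_act h x) = gquot_act (g * h) x.
Proof.
by elim/quotW: x => x; rewrite (gquot_actE h x) !gquot_actE; apply/quot_eqP; apply: P_defect.
Qed.

Definition gquot_hmod : hmod H :=
  HMod gquot_act_linr gquot_act_linl gquot_act_one gquot_act_mul.

Lemma gquot_quotient_map : @quotient_map k H HH M (incl HH gquot_hmod) pi P.
Proof.
split; [split|split].
- exact: quot_pi_klinear.
- by move=> h m; rewrite /= gquot_actE.
- by move=> y; exists (repr y); rewrite reprK.
- exact: quot_pi_eq0.
Qed.

End GlobalQuotient.

Lemma core_set_psubmod (M : pmod HH) : psubmod (@core_set k H HH M).
Proof.
split; [|split].
- by move=> g h; rewrite !klinear0 //; apply: pact_linr.
- by move=> a x y Hx Hy g h; rewrite !pact_linr Hx Hy.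
- by move=> h m Hm g g'; rewrite Hm Hm mulrA.
Qed.

Lemma core_set_global (M : pmod HH) : psub_global (@core_set k H HH M).
Proof. by move=> g h m; apply. Qed.

Lemma is_global_core_core_set (M : pmod HH) : is_global_core (@core_set k H HH M).
Proof.
split; [exact: core_set_psubmod | split; first exact: core_set_global].
by move=> Q _ Q_global m Qm g h; apply: Q_global.
Qed.

Lemma pmorph_core_set (M N : pmod HH) (f : M -> N) m :
  pmorph f -> core_set m -> core_set (f m).
Proof. by move=> [_ f_act] Hm g h; rewrite -!f_act Hm. Qed.

Definition core_hmod (M : pmod HH) : hmod H :=
  gsub_hmod (core_set_psubmod M) (@core_set_global M).

Lemma core_valP (M : pmod HH) (x : core_hmod M) : core_set (val x).
Proof. exact/ksubspace_predP/valP. Qed.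

Lemma core_set_im (M : pmod HH) (m : M) : core_set m <-> exists x : core_hmod M, val x = m.
Proof.
split=> [Hm | [x <-]]; last exact: core_valP.
have Hm' : m \in ksubspace_pred (@core_set k H HH M) by apply/ksubspace_predP.
by exists (GSub Hm').
Qed.

Definition coreF (M N : pmod HH) (f : M -> N) (x : core_hmod M) : core_hmod N :=
  insubd 0 (f (val x)).

Lemma core_valF (M N : pmod HH) (f : M -> N) :
  pmorph f -> forall x, val (coreF f x) = f (val x).
Proof.
by move=> f_pm x; rewrite insubdK //; apply/ksubspace_predP/(pmorph_core_set f_pm)/core_valP.
Qed.

Lemma core_functor : is_functor_PH coreF.
Proof.
split; [move=> M N f f_pm | split=> [M x | M N L f g f_pm g_pm x]].
- case: (f_pm) => f_lin f_act; split=> [a x y | h x]; apply: val_inj.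
    by rewrite /= !core_valF // f_lin.
  by rewrite /= !core_valF // f_act.
- exact: valKd.
- by apply: val_inj; rewrite !core_valF //; apply: pmorph_comp.
Qed.

Lemma pmorph_incl_core_set (X : hmod H) (M : pmod HH) (f : X -> M) x :
  @pmorph k H HH (incl HH X) M f -> core_set (f x).
Proof. by move=> f_pm; apply: (pmorph_core_set f_pm) => g h; apply: hact_mul. Qed.

Definition core_corestr (X : hmod H) (M : pmod HH) (f : X -> M) (x : X) : core_hmod M :=
  insubd 0 (f x).

Lemma core_corestrK (X : hmod H) (M : pmod HH) (f : X -> M) :
  @pmorph k H HH (incl HH X) M f -> forall x, val (core_corestr f x) = f x.
Proof. by move=> f_pm x; rewrite insubdK //; apply/ksubspace_predP/pmorph_incl_core_set. Qed.

Lemma core_right_adjoint : right_adjoint_of_incl coreF.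
Proof.
exists core_corestr, (fun X M g x => val (g x)).
split; [|split; [|split; [|split; [|split]]]].
- move=> X M f f_pm; case: (f_pm) => f_lin f_act.
  by split=> [a x y | h x]; apply: val_inj; rewrite /= !core_corestrK // ?f_lin ?f_act.
- by move=> X M g [g_lin g_act]; split=> [a x y | h x] /=; rewrite ?g_lin ?g_act.
- exact: core_corestrK.
- by move=> X M g _ x; rewrite /core_corestr valKd.
- by [].
- move=> X M N f v f_pm v_pm x; apply: val_inj.
  by rewrite core_valF // !core_corestrK //; apply: pmorph_comp.
Qed.

Lemma gen_psubmod_psubmod (M : pmod HH) (G : M -> Prop) : psubmod (gen_psubmod G).
Proof.
split; [|split].
- by move=> P [P0 _].
- move=> a x y Gx Gy P P_sub P_G; case: (P_sub) => _ [P_lin _].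
  by apply: P_lin; [apply: Gx | apply: Gy].
- by move=> h m Gm P P_sub P_G; apply: (psubmod_act P_sub); apply: Gm.
Qed.

Lemma gen_psubmod_gen (M : pmod HH) (G : M -> Prop) x : G x -> gen_psubmod G x.
Proof. by move=> Gx P _; apply. Qed.

Lemma psubmod_preim (M N : pmod HH) (f : M -> N) (P : N -> Prop) :
  pmorph f -> psubmod P -> psubmod (fun m => P (f m)).
Proof.
move=> [f_lin f_act] [P0 [P_lin P_act]]; split; [|split].
- by rewrite klinear0.
- by move=> a x y Px Py; rewrite f_lin; apply: P_lin.
- by move=> h m Pm; rewrite f_act; apply: P_act.
Qed.

Lemma pmorph_shadow_gen (M N : pmod HH) (f : M -> N) m :
  pmorph f -> shadow_gen m -> shadow_gen (f m).
Proof.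
by move=> [f_lin f_act] [h [g [m' ->]]]; exists h, g, (f m'); rewrite klinearB // !f_act.
Qed.

Definition shadow_submod (M : pmod HH) := gen_psubmod (@shadow_gen k H HH M).

Lemma pmorph_shadow_submod (M N : pmod HH) (f : M -> N) m :
  pmorph f -> shadow_submod m -> shadow_submod (f m).
Proof.
move=> f_pm Nm; apply: (Nm (fun x => shadow_submod (f x))) => [|x /(pmorph_shadow_gen f_pm)].
  exact/(psubmod_preim f_pm)/gen_psubmod_psubmod.
exact: gen_psubmod_gen.
Qed.

Lemma shadow_submod_defect (M : pmod HH) h g (m : M) :
  shadow_submod (pact h (pact g m) - pact (h * g) m).
Proof. by apply: gen_psubmod_gen; exists h, g, m. Qed.

Lemma shadow_submod_global (M : pmod HH) (m : M) : pglobal M -> shadow_submod m -> m = 0.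
Proof.
move=> M_global Nm; apply: (Nm (fun x => x = 0)) => [|x [h [g [m' ->]]]].
  2: by rewrite M_global subrr.
split; [|split] => // [a x y -> -> | h x ->]; first by rewrite scaler0 addr0.
by rewrite klinear0 //; apply: pact_linr.
Qed.

Section GlobalShadow.

Let shadow_ksub (M : pmod HH) :=
  psubmod_ksubspace (gen_psubmod_psubmod (@shadow_gen k H HH M)).

Definition shadow_hmod (M : pmod HH) : hmod H :=
  gquot_hmod (gen_psubmod_psubmod _) (@shadow_submod_defect M).

Definition shadow_pi (M : pmod HH) (m : M) : shadow_hmod M :=
  \pi_(quot_space (shadow_ksub M)) m.

Lemma shadow_piW (M : pmod HH) (Pr : shadow_hmod M -> Prop) :
  (forall m, Pr (shadow_pi m)) -> forall x, Pr x.
Proof. by move=> Pr_pi x; elim/quotW: x. Qed.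

Lemma shadow_pi_klinear (M : pmod HH) : klinear (@shadow_pi M).
Proof. exact: quot_pi_klinear. Qed.

Lemma shadow_actE (M : pmod HH) h (m : M) : hact h (shadow_pi m) = shadow_pi (pact h m).
Proof. exact: gquot_actE. Qed.

Lemma shadow_quotient_map (M : pmod HH) :
  @quotient_map k H HH M (incl HH (shadow_hmod M)) (@shadow_pi M) (@shadow_submod M).
Proof. exact: gquot_quotient_map. Qed.

Lemma is_global_shadow_shadow_submod (M : pmod HH) : is_global_shadow (@shadow_submod M).
Proof.
split; [exact: gen_psubmod_psubmod | split].
  exists (incl HH (shadow_hmod M)), (@shadow_pi M).
  by split; [exact: shadow_quotient_map | exact: hact_mul].
move=> P _ [Q [q [[q_pm [_ q_ker]] Q_global]]] m Nm; apply/q_ker.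
exact: shadow_submod_global Q_global (pmorph_shadow_submod q_pm Nm).
Qed.

Lemma shadow_reprE (M : pmod HH) (X : hmod H) (f : M -> X) m :
  @pmorph k H HH M (incl HH X) f -> f (repr (shadow_pi m)) = f m.
Proof.
move=> f_pm; apply: klinear_repr_pi; first by case: f_pm.
by move=> v /(pmorph_shadow_submod f_pm); apply: shadow_submod_global => g h; apply: hact_mul.
Qed.

Definition shadowF (M N : pmod HH) (f : M -> N) (x : shadow_hmod M) : shadow_hmod N :=
  shadow_pi (f (repr (x : quot_space (shadow_ksub M)))).

Lemma shadowF_pi (M N : pmod HH) (f : M -> N) :
  pmorph f -> forall m, shadowF f (shadow_pi m) = shadow_pi (f m).
Proof.
move=> [f_lin f_act] m; have pif_lin : klinear (@shadow_pi N \o f).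
  by move=> a x y; rewrite /= f_lin shadow_pi_klinear.
have pif_kill v : shadow_submod v -> (@shadow_pi N \o f) v = 0.
  by move/(pmorph_shadow_submod (conj f_lin f_act))/(quot_pi_eq0 (shadow_ksub N)).
exact: (klinear_repr_pi _ pif_lin pif_kill).
Qed.

Lemma shadow_functor : is_functor_PH shadowF.
Proof.
split; [move=> M N f f_pm | split=> [M x | M N L f g f_pm g_pm]].
- case: (f_pm) => f_lin f_act; split=> [a x y | h x].
    elim/shadow_piW: x => x; elim/shadow_piW: y => y.
    by rewrite -shadow_pi_klinear !shadowF_pi // f_lin shadow_pi_klinear.
  by elim/shadow_piW: x => x; rewrite shadow_actE !shadowF_pi // f_act shadow_actE.
- exact: reprK.
- by elim/shadow_piW => m; rewrite !shadowF_pi //; apply: pmorph_comp.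
Qed.

Lemma shadow_left_adjoint : left_adjoint_of_incl shadowF.
Proof.
exists (fun M X g m => g (shadow_pi m)).
exists (fun M X f x => f (repr (x : quot_space (shadow_ksub M)))).
split; [|split; [|split; [|split; [|split]]]].
- move=> M X g [g_lin g_act]; split=> [a x y | h m] /=.
    by rewrite shadow_pi_klinear g_lin.
  by rewrite -g_act shadow_actE.
- move=> M X f f_pm; case: (f_pm) => f_lin f_act; split=> [a x y | h x].
    elim/shadow_piW: x => x; elim/shadow_piW: y => y.
    by rewrite -shadow_pi_klinear !shadow_reprE // f_lin.
  by elim/shadow_piW: x => x; rewrite shadow_actE !shadow_reprE // f_act.
- by move=> M X g _ x; congr g; exact: reprK.
- by move=> M X f f_pm m; rewrite shadow_reprE.
- by move=> M N X u g u_pm _ m /=; rewrite shadowF_pi.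
- by [].
Qed.

End GlobalShadow.

End PartialModules.

Theorem mainTheorem4 (k : fieldType) (H : algType k) (HH : hopf H) :
  (* (a) the global core *)
  (forall M : pmod HH, is_global_core (@core_set k H HH M)) /\
  (exists (c : pmod HH -> hmod H)
          (cF : forall M N : pmod HH, (M -> N) -> c M -> c N)
          (iota : forall M : pmod HH, c M -> M),
     is_functor_PH cF /\
     (* c M is the global core of M, embedded in M by iota M ... *)
     (forall M : pmod HH, @pmorph k H HH (incl HH (c M)) M (iota M)) /\
     (forall (M : pmod HH) (x y : c M), iota M x = iota M y -> x = y) /\
     (forall (M : pmod HH) (m : M), core_set m <-> exists x, iota M x = m) /\
     (* ... and c f is the restriction of f *)
     (forall (M N : pmod HH) (f : M -> N), pmorph f ->
        forall x, iota N (cF M N f x) = f (iota M x)) /\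
     right_adjoint_of_incl cF) /\
  (* (b) the global shadow *)
  (forall M : pmod HH, is_global_shadow (gen_psubmod (@shadow_gen k H HH M))) /\
  (exists (s : pmod HH -> hmod H)
          (sF : forall M N : pmod HH, (M -> N) -> s M -> s N)
          (q : forall M : pmod HH, M -> s M),
     is_functor_PH sF /\
     (* s M = M / N, with quotient map q M ... *)
     (forall M : pmod HH, @quotient_map k H HH M (incl HH (s M)) (q M)
                  (gen_psubmod (@shadow_gen k H HH M))) /\
     (* ... and s f is the map induced by f on the quotients *)
     (forall (M N : pmod HH) (f : M -> N), pmorph f ->
        forall m, sF M N f (q M m) = q N (f m)) /\
     left_adjoint_of_incl sF).
Proof.
split; [|split; [|split]].
- exact: is_global_core_core_set.
- exists (@core_hmod k H HH), (@coreF k H HH), (fun M x => val x).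
  split; first exact: core_functor.
  split; first by move=> M; apply: gsub_val_pmorph.
  split; first by move=> M; apply: val_inj.
  split; first exact: core_set_im.
  split; [exact: core_valF | exact: core_right_adjoint].
- exact: is_global_shadow_shadow_submod.
- exists (@shadow_hmod k H HH), (@shadowF k H HH), (@shadow_pi k H HH).
  split; first exact: shadow_functor.
  split; first exact: shadow_quotient_map.
  split; [exact: shadowF_pi | exact: shadow_left_adjoint].
Qed.
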